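(* Let $G=(V,E)$ and $G'=(V',E')$ be finite simple graphs. Then $\overline{X}_G=\overline{X}_{G'}$ if and only if the multisets $\{I_{G|_W}(t): W\subseteq V\}$ and $\{I_{G'|_{W'}}(t): W'\subseteq V'\}$ of independence polynomials of induced subgraphs (one entry per vertex subset, including the empty set) are equal.
   Context: $\overline{X}_G=\sum_\kappa\prod_{v\in V}\prod_{i\in\kappa(v)}x_i$, summed over proper set colorings $\kappa$ of $G$ (maps from $V$ to nonempty subsets of $\mathbb{Z}_{>0}$ with adjacent vertices receiving disjoint sets). For a graph $H$, its independence polynomial is $I_H(t)=\sum_{n\ge0}a_nt^n$ where $a_n$ is the number of independent sets of size $n$ in $H$. $G|_W$ is the induced subgraph on $W$. *)

From HB Require Import structures.
From mathcomp Require Import all_boot all_order all_algebra.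
Set Implicit Arguments. Unset Strict Implicit. Unset Printing Implicit Defensive.
Import GRing.Theory.
Local Open Scope ring_scope.

(* A finite simple graph is given by a finite vertex type V and an adjacency
   relation e : rel V that is symmetric and irreflexive. *)

(* Proper set colorings with colours in {1,...,n} (represented by 'I_n):
   every vertex gets a nonempty (finite) set of colours, adjacent vertices
   get disjoint sets. *)
Definition proper_set_coloring (V : finType) (e : rel V) (n : nat)
    (k : {ffun V -> {set 'I_n}}) : bool :=
  [forall v, k v != set0] && [forall u, forall v, e u v ==> [disjoint k u & k v]].

(* Coefficient of the monomial x_1^(a 0) ... x_n^(a (n-1)) in the set
   chromatic symmetric function \overline{X}_G: the number of proper set
   colorings in which colour i is used by exactly (a i) vertices (colourings
   contributing to this monomial only use colours 1..n). *)
Definition setchrom_coef (V : finType) (e : rel V) (n : nat) (a : 'I_n -> nat)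
    : nat :=
  #|[set k : {ffun V -> {set 'I_n}} | proper_set_coloring e k &&
        [forall i, #|[set v | i \in k v]| == a i]]|.

(* Equality of the set chromatic symmetric functions (as formal power series,
   i.e. coefficientwise over all monomials). *)
Definition setchrom_eq (V : finType) (e : rel V) (V' : finType) (e' : rel V')
    : Prop :=
  forall (n : nat) (a : 'I_n -> nat), setchrom_coef e a = setchrom_coef e' a.

Definition independent (V : finType) (e : rel V) (S : {set V}) : bool :=
  [forall u in S, forall v in S, ~~ e u v].

(* Independence polynomial of the induced subgraph G|_W: its independent sets
   are exactly the independent sets of G contained in W. *)
Definition indep_poly_induced (V : finType) (e : rel V) (W : {set V})
    : {poly int} :=
  \sum_(S : {set V} | (S \subset W) && independent e S) 'X^#|S|.

(* The multiset {I_{G|_W}(t) : W subset V}, as a sequence (one entry per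
   subset W, including the empty set), to be compared up to permutation. *)
Definition induced_indep_polys (V : finType) (e : rel V) : seq {poly int} :=
  [seq indep_poly_induced e W | W <- enum [set: {set V}]].

(* Grouping a set colouring by colours turns it into a family of independent
   colour classes covering V, while families whose classes merely lie inside W
   are counted by products of coefficients of I_{G|W}.  Inclusion-exclusion
   over W therefore gives
     (-1)^|V| [x^a] X_G = sum_W (-1)^|W| prod_i [t^(a i)] I_{G|W}(t),
   and the sign (-1)^|W| is read off I_{G|W} itself, whose coefficient of t
   is |W|.  So X_G is the family of signed "coefficient moments" of the
   multiset {I_{G|W}}, and the multiset is recovered from its moments: a
   polynomial q is separated from finitely many others r by a product of the
   linear functionals p |-> p_k - r_k, hence a signed multiset with vanishing
   moments puts weight zero on q. *)

From mathcomp Require Import all_boot all_order all_algebra ring.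
Set Implicit Arguments. Unset Strict Implicit. Unset Printing Implicit Defensive.
Import GRing.Theory Num.Theory.
Local Open Scope ring_scope.

Section CoefMoments.
Variable R : idomainType.

Definition coef_moment (L : seq (R * {poly R})) (s : seq nat) : R :=
  \sum_(x <- L) x.1 * \prod_(j <- s) x.2`_j.

Lemma coef_moment_rescale (L : seq (R * {poly R})) (phi : {poly R} -> R)
    (k : nat) (c : R) (s : seq nat) :
  coef_moment [seq (x.1 * (phi x.2 * (x.2`_k - c)), x.2) | x <- L] s =
  coef_moment [seq (x.1 * phi x.2, x.2) | x <- L] (k :: s) -
  c * coef_moment [seq (x.1 * phi x.2, x.2) | x <- L] s.
Proof.
rewrite /coef_moment !big_map mulr_sumr -sumrB.
by apply: eq_bigr => x _; rewrite big_cons /=; ring.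
Qed.

Lemma coef_moment_separator (L : seq (R * {poly R})) (q : {poly R})
    (D : seq {poly R}) :
  (forall s, coef_moment L s = 0) -> q \notin D ->
  exists phi : {poly R} -> R,
    [/\ forall s, coef_moment [seq (x.1 * phi x.2, x.2) | x <- L] s = 0,
        phi q != 0 & {in D, forall r, phi r = 0}].
Proof.
move=> L0; elim: D => [_|r D IHD].
  exists (fun=> 1); split=> [s||//]; last exact: oner_neq0.
  rewrite -[RHS](L0 s) /coef_moment big_map.
  by apply: eq_bigr => x _; rewrite mulr1.
rewrite inE negb_or => /andP[qr /IHD[phi [phiL0 phiq phiD]]].
have [k rkq] : exists k, r`_k != q`_k.
  exists (size (r - q)).-1; rewrite -subr_eq0 -coefB.
  by rewrite -/(lead_coef _) lead_coef_eq0 subr_eq0 eq_sym.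
exists (fun p => phi p * (p`_k - r`_k)); split.
- by move=> s; rewrite coef_moment_rescale !phiL0 mulr0 subrr.
- by rewrite mulf_neq0 // subr_eq0 eq_sym.
- by move=> p; rewrite inE => /predU1P[->|/phiD->]; rewrite ?subrr ?mulr0 ?mul0r.
Qed.

Lemma coef_moments_eq0_fiber (L : seq (R * {poly R})) (q : {poly R}) :
  (forall s, coef_moment L s = 0) -> \sum_(x <- L | x.2 == q) x.1 = 0.
Proof.
move=> L0; set D := [seq x.2 | x <- L & x.2 != q].
have qD : q \notin D.
  apply/mapP=> -[x]; rewrite mem_filter => /andP[xq _] qx.
  by rewrite qx eqxx in xq.
have [phi [phiL0 phiq phiD]] := coef_moment_separator L0 qD.
have := phiL0 [::]; rewrite /coef_moment big_map (bigID (fun x => x.2 == q)) /=.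
rewrite [X in _ + X]big_seq_cond [X in _ + X]big1 ?addr0; last first.
  move=> x /andP[xL xq]; rewrite phiD ?mulr0 ?mul0r //.
  by apply: map_f; rewrite mem_filter xq.
rewrite (eq_bigr (fun x => x.1 * phi q)); last first.
  by move=> x /eqP->; rewrite big_nil mulr1.
by rewrite -mulr_suml => /eqP; rewrite mulf_eq0 (negbTE phiq) orbF => /eqP.
Qed.

Lemma sum_fiber_graph (r : seq {poly R}) (f : {poly R} -> R) (q : {poly R}) :
  \sum_(x <- [seq (f p, p) | p <- r] | x.2 == q) x.1 = f q *+ count_mem q r.
Proof.
rewrite big_map (eq_bigr (fun=> f q)) => [|p /= /eqP->//].
by rewrite big_const_seq iter_addr_0.
Qed.
End CoefMoments.

Lemma perm_eq_coef_moments (R : numDomainType) (w : {poly R} -> R) (c : R)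
    (r r' : seq {poly R}) :
  (forall q, w q != 0) -> `|c| = 1 ->
  (forall s, \sum_(p <- r) w p * \prod_(j <- s) p`_j =
             c * \sum_(p <- r') w p * \prod_(j <- s) p`_j) ->
  perm_eq r r'.
Proof.
move=> w_neq0 c_norm rr'; set L := [seq (w p, p) | p <- r] ++
                                   [seq (- (c * w p), p) | p <- r'].
have L0 s : coef_moment L s = 0.
  rewrite /coef_moment big_cat !big_map /= rr' mulr_sumr -big_split /=.
  by rewrite big1 // => p _; rewrite mulNr mulrA subrr.
apply/allP=> q _; apply/eqP; have := coef_moments_eq0_fiber q L0.
rewrite big_cat !sum_fiber_graph /= mulNrn => /eqP; rewrite subr_eq0 -mulrnAr.
move=> /eqP/(congr1 Num.norm); rewrite normrM c_norm mul1r !normrMn.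
have wq_neq0 : `|w q| != 0 by rewrite normr_eq0.
rewrite -!(mulr_natr `|w q|) => /(mulfI wq_neq0)/eqP.
by rewrite eqr_nat => /eqP.
Qed.

Section AlternatingSums.
Variables (R : numDomainType) (T : finType).

Lemma sum_sign_supsets (U : {set T}) :
  \sum_(W : {set T} | U \subset W) (-1) ^+ #|W| =
  (-1) ^+ #|T| * (U == setT)%:R :> R.
Proof.
have [->|UnT] := eqVneq U setT.
  by rewrite mulr1 (big_pred1 setT) ?cardsT // => W; rewrite subTset.
have /subsetPn[x _ xU] : ~~ (setT \subset U) by rewrite subTset.
pose toggle (W : {set T}) := if x \in W then W :\ x else x |: W.
have toggleK : involutive toggle.
  move=> W; rewrite /toggle; case: (boolP (x \in W)) => xW.
    by rewrite setD11 setD1K.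
  by rewrite setU11 setU1K.
set S := (X in X = _); have S_opp : S = - S.
  rewrite {1}/S (reindex_inj (inv_inj toggleK)) /S -sumrN /=.
  apply: eq_big => W; rewrite /toggle; case: ifP => xW.
  - by rewrite subsetD1 xU andbT.
  - by rewrite -[in RHS](setU1K (negbT xW)) subsetD1 xU andbT.
  - by move=> _; rewrite (cardsD1 x W) xW exprS mulN1r opprK.
  - by move=> _; rewrite cardsU1 xW exprS mulN1r.
have : S *+ 2 == 0 by rewrite mulr2n {2}S_opp subrr.
by rewrite mulrn_eq0 mulr0 => /eqP.
Qed.

Lemma sum_sign_card_subset_support (X : finType) (P : pred X) (g : X -> {set T}) :
  \sum_(W : {set T}) (-1) ^+ #|W| * #|[set x | P x & g x \subset W]|%:R =
  (-1) ^+ #|T| * #|[set x | P x & g x == setT]|%:R :> R.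
Proof.
under eq_bigr do rewrite -sum1dep_card natr_sum mulr_sumr.
rewrite -sum1dep_card natr_sum mulr_sumr (exchange_big_dep P) /=; last first.
  by move=> W x _ /andP[].
rewrite [RHS]big_mkcondr; apply: eq_bigr => x Px; rewrite Px /=.
under eq_bigr do rewrite mulr1.
by rewrite sum_sign_supsets; case: (g x == setT); rewrite ?mulr0.
Qed.
End AlternatingSums.

Definition transpose_fset (I J : finType) (f : {ffun I -> {set J}}) :
  {ffun J -> {set I}} :=
  [ffun j => [set i | j \in f i]].

Lemma transpose_fsetK (I J : finType) :
  cancel (@transpose_fset I J) (@transpose_fset J I).
Proof. by move=> f; apply/ffunP=> i; apply/setP=> j; rewrite !(ffunE, inE). Qed.

Lemma mem_transpose_fset (I J : finType) (f : {ffun I -> {set J}}) i j :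
  (i \in transpose_fset f j) = (j \in f i).
Proof. by rewrite ffunE inE. Qed.

Section SetColourings.
Variables (V : finType) (e : rel V).

Definition indep_family n (a : 'I_n -> nat) (f : {ffun 'I_n -> {set V}}) : bool :=
  [forall i, independent e (f i) && (#|f i| == a i)].

Lemma coef_indep_poly_induced (W : {set V}) (k : nat) :
  (indep_poly_induced e W)`_k =
  #|[set S : {set V} | (S \subset W) && independent e S && (#|S| == k)]|%:R.
Proof.
rewrite coef_sum -sum1dep_card natr_sum [RHS]big_mkcondr; apply: eq_bigr => S _.
by rewrite coefXn eq_sym; case: (_ == _).
Qed.

Lemma independent_set1 (v : V) : irreflexive e -> independent e [set v].
Proof.
move=> e_irr; apply/forallP=> u; apply/implyP; rewrite inE => /eqP->.
by apply/forallP=> w; apply/implyP; rewrite inE => /eqP->; rewrite e_irr.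
Qed.

Lemma coef1_indep_poly_induced (W : {set V}) :
  irreflexive e -> (indep_poly_induced e W)`_1 = #|W|%:R.
Proof.
move=> e_irr; rewrite coef_indep_poly_induced -(card_imset W (@set1_inj V)).
congr _%:R; apply: eq_card => S; rewrite inE.
apply/idP/imsetP => [/andP[/andP[SW _] /cards1P[v Sv]]|[v vW ->]].
  by exists v; rewrite // -sub1set -Sv.
by rewrite sub1set vW independent_set1 ?cards1.
Qed.

Lemma prod_coef_indep_poly_induced n (a : 'I_n -> nat) (W : {set V}) :
  \prod_(i < n) (indep_poly_induced e W)`_(a i) =
  #|[set f | indep_family a f & \bigcup_i f i \subset W]|%:R.
Proof.
under eq_bigr do rewrite coef_indep_poly_induced.
rewrite -natr_prod -cardsXn; congr _%:R; apply: eq_card => f.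
rewrite in_setXn inE.
apply/forallP/andP => [fW|[/forallP f_indep /bigcupsP fW] i].
  split; last by apply/bigcupsP=> i _; have /[!inE]/andP[/andP[]] := fW i.
  by apply/forallP=> i; have /[!inE]/andP[/andP[_ ->]] := fW i.
by rewrite inE fW //=; apply: f_indep.
Qed.

Lemma proper_set_coloring_transpose n (f : {ffun 'I_n -> {set V}}) :
  proper_set_coloring e (transpose_fset f) =
  [forall i, independent e (f i)] && (\bigcup_i f i == setT).
Proof.
rewrite /proper_set_coloring [RHS]andbC; congr andb.
  apply/forallP/eqP => [nonempty|cover v].
    apply/setP=> v; rewrite inE; have /set0Pn[i] := nonempty v.
    by rewrite mem_transpose_fset => vfi; apply/bigcupP; exists i.
  have /bigcupP[i _ vfi] : v \in \bigcup_i f i by rewrite cover inE.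
  by apply/set0Pn; exists i; rewrite mem_transpose_fset.
apply/forallP/forallP => [disj i|indep u].
  apply/forallP=> u; apply/implyP=> ufi; apply/forallP=> v; apply/implyP=> vfi.
  apply/negP=> euv; have /forallP/(_ v)/implyP/(_ euv) := disj u.
  move=> /(@disjointFr _ _ _ i).
  by rewrite !mem_transpose_fset ufi vfi => /(_ isT).
apply/forallP=> v; apply/implyP=> euv; rewrite disjoint_subset; apply/subsetP=> i.
rewrite !inE !mem_transpose_fset => ufi; apply/negP=> vfi.
have /forallP/(_ u)/implyP/(_ ufi)/forallP/(_ v)/implyP/(_ vfi) := indep i.
by rewrite euv.
Qed.

Lemma setchrom_coefE n (a : 'I_n -> nat) :
  setchrom_coef e a = #|[set f | indep_family a f & \bigcup_i f i == setT]|.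
Proof.
rewrite /setchrom_coef -(card_imset _ (can_inj (@transpose_fsetK V 'I_n))).
rewrite (can2_imset_pre _ (@transpose_fsetK V _) (@transpose_fsetK _ V)).
apply: eq_card => f; rewrite !inE proper_set_coloring_transpose.
have -> : [forall i, #|[set v | i \in transpose_fset f v]| == a i] =
          [forall i, #|f i| == a i].
  apply: eq_forallb => i; congr (_ == _).
  by apply: eq_card => v; rewrite inE mem_transpose_fset.
rewrite -andbA [(_ == setT) && _]andbC andbA; congr andb.
apply/andP/forallP => [[/forallP f_indep /forallP f_size] i|f_ok].
  by rewrite f_indep f_size.
by split; apply/forallP=> i; case/andP: (f_ok i).
Qed.

Lemma setchrom_coef_sign_expansion n (a : 'I_n -> nat) :
  (-1) ^+ #|V| * (setchrom_coef e a)%:R =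
  \sum_(W : {set V}) (-1) ^+ #|W| * \prod_(i < n) (indep_poly_induced e W)`_(a i)
  :> int.
Proof.
under eq_bigr do rewrite prod_coef_indep_poly_induced.
by rewrite sum_sign_card_subset_support setchrom_coefE.
Qed.

Lemma setchrom_coef_induced_indep_polys n (a : 'I_n -> nat) :
  irreflexive e ->
  (-1) ^+ #|V| * (setchrom_coef e a)%:R =
  \sum_(p <- induced_indep_polys e) (-1) ^+ `|p`_1| * \prod_(i < n) p`_(a i).
Proof.
move=> e_irr; rewrite setchrom_coef_sign_expansion /induced_indep_polys.
rewrite big_map big_enum; apply: eq_big => [W|W _]; first by rewrite inE.
by rewrite coef1_indep_poly_induced // natz absz_nat.
Qed.

Lemma setchrom_coef_moment (s : seq nat) :
  irreflexive e ->
  (-1) ^+ #|V| * (setchrom_coef e (fun i : 'I_(size s) => nth 0%N s i))%:R =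
  \sum_(p <- induced_indep_polys e) (-1) ^+ `|p`_1| * \prod_(j <- s) p`_j.
Proof.
move=> e_irr; rewrite setchrom_coef_induced_indep_polys //.
by apply: eq_bigr => p _; rewrite (big_nth 0%N) big_mkord.
Qed.

Lemma size_induced_indep_polys : size (induced_indep_polys e) = (2 ^ #|V|)%N.
Proof. by rewrite size_map -cardE -powersetT card_powerset cardsT. Qed.
End SetColourings.

Theorem corollary1p6 (V : finType) (e : rel V)
    (e_sym : symmetric e) (e_irr : irreflexive e)
    (V' : finType) (e' : rel V')
    (e'_sym : symmetric e') (e'_irr : irreflexive e') :
  setchrom_eq e e' <->
  perm_eq (induced_indep_polys e) (induced_indep_polys e').
Proof.
split=> [same_coef | same_polys].
  apply: (@perm_eq_coef_moments _ (fun p => (-1) ^+ `|p`_1|)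
                                  ((-1) ^+ (#|V| + #|V'|))).
  - by move=> p; rewrite signr_eq0.
  - by rewrite normr_sign.
  move=> s; rewrite -!setchrom_coef_moment // same_coef.
  by rewrite exprD -mulrA signrMK.
have same_card : #|V| = #|V'|.
  apply/eqP; rewrite -(@eqn_exp2l 2) // -(size_induced_indep_polys e).
  by rewrite -(size_induced_indep_polys e') (perm_size same_polys).
move=> n a; apply/eqP; rewrite -(eqr_nat int).
rewrite -(inj_eq (inv_inj (signrMK (R := int) #|V|))).
rewrite {2}same_card !setchrom_coef_induced_indep_polys //.
by rewrite (perm_big _ same_polys).
Qed.
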